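(* If a dual-convex $m\times n$ net in $I^3$ is infinitesimally flexible in $I^3$, then it has a nontrivial infinitesimal isotropic isometric deformation consisting of isotropic vectors (vectors parallel to the $z$-axis).
   Context: $I^3$ is $\mathbb{R}^3$ with coordinates $(x,y,z)$; isotropic = parallel to the $z$-axis; top view $\overline P$ of $P=(x,y,z)$ is $(x,y)$. Metric duality: point $P=(P^1,P^2,P^3)\leftrightarrow$ plane $P^*\colon z=P^1x+P^2y-P^3$. Infinitesimal isotropic congruence: vector field $V(\mathbf x)=a\mathbf x+\mathbf b$, $\mathbf b\in\mathbb R^3$, $a=\begin{pmatrix}0&-\phi&0\\ \phi&0&0\\ c_1&c_2&0\end{pmatrix}$. An $m\times n$ net: points $F_{ij}$, $0\le i\le m,0\le j\le n$, with $F_{ij},F_{i+1,j},F_{i+1,j+1},F_{i,j+1}$ consecutive vertices of a convex planar quadrilateral (face $p_{ij}$) for all $0\le i<m,0\le j<n$. Boundary vertices: $i\in\{0,m\}$ or $j\in\{0,n\}$; consecutive faces around non-boundary $F_{ij}$: $p_{i-1,j-1},p_{i,j-1},p_{ij},p_{i-1,j}$. Convex 4-hedral angle with vertex $O$: union of rays from $O$ meeting a convex quadrilateral in a plane not through $O$; flat angles: rays through one side; admissible: isotropic line through $O$ meets its interior. Dual-convex: $m,n\ge2$ and at each non-boundary vertex the four consecutive face planes are planes of four consecutive flat angles of an admissible convex 4-hedral angle. Curvature at non-boundary vertex with consecutive faces $p_1..p_4$: $\Omega=\frac12\sum_{k=1}^4\det(\overline{p_k^*},\overline{p_{k+1}^*})$,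 $p_5=p_1$. An infinitesimal isotropic isometric deformation of a dual-convex net $F_{ij}$ is a collection $V_{ij}\in\mathbb R^3$ such that (face condition) for each face $p_{kl}$ there is an infinitesimal isotropic congruence $V$ with $V_{ij}=V(F_{ij})$ at its four vertices, and (vertex condition) $\frac{d}{dt}\Omega(F_{ij}+tV_{ij})|_{t=0}=0$ for each non-boundary vertex. It is trivial if one infinitesimal isotropic congruence $V$ satisfies $V_{ij}=V(F_{ij})$ for all $i,j$. The net is infinitesimally flexible in $I^3$ if it has a nontrivial one. *)

From HB Require Import structures.
From mathcomp Require Import all_boot all_order all_algebra.
From mathcomp Require Import all_classical all_reals all_analysis.
Set Implicit Arguments. Unset Strict Implicit. Unset Printing Implicit Defensive.
Import Order.TTheory GRing.Theory Num.Theory.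
Import numFieldNormedType.Exports.
Local Open Scope ring_scope.

Section IsotropicNets.
Variable R : realType.

Definition pt := (R * R * R)%type.
Definition px (p : pt) : R := p.1.1.
Definition py (p : pt) : R := p.1.2.
Definition pz (p : pt) : R := p.2.
Definition pzero : pt := (0, 0, 0).
Definition padd (p q : pt) : pt := (px p + px q, py p + py q, pz p + pz q).
Definition psub (p q : pt) : pt := (px p - px q, py p - py q, pz p - pz q).
Definition pscale (t : R) (p : pt) : pt := (t * px p, t * py p, t * pz p).
Definition cross (p q : pt) : pt :=
  (py p * pz q - pz p * py q, pz p * px q - px p * pz q, px p * py q - py p * px q).
Definition dot (p q : pt) : R := px p * px q + py p * py q + pz p * pz q.
Definition det3 (p q r : pt) : R := dot (cross p q) r.
Definition ez : pt := (0, 0, 1).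

(* Convex (nondegenerate) planar quadrilateral with consecutive vertices A,B,C,D:
   the four points are coplanar and all four turns are nonzero and have the
   same orientation (w.r.t. the plane normal). *)
Definition turn (A B C : pt) : pt := cross (psub B A) (psub C B).
Definition convex_quad (A B C D : pt) : Prop :=
  det3 (psub B A) (psub C A) (psub D A) = 0 /\
  turn A B C <> pzero /\
  0 < dot (turn A B C) (turn B C D) /\
  0 < dot (turn A B C) (turn C D A) /\
  0 < dot (turn A B C) (turn D A B).

(* m x n net: F i j, 0 <= i <= m, 0 <= j <= n (values outside are irrelevant). *)
Definition is_net (m n : nat) (F : nat -> nat -> pt) : Prop :=
  forall i j, (i < m)%N -> (j < n)%N ->
    convex_quad (F i j) (F i.+1 j) (F i.+1 j.+1) (F i j.+1).

Definition in_face (G : nat -> nat -> pt) (k l : nat) (X : pt) : Prop :=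
  det3 (psub (G k.+1 l) (G k l)) (psub (G k l.+1) (G k l)) (psub X (G k l)) = 0.

Definition in_plane3 (O A B X : pt) : Prop :=
  det3 (psub A O) (psub B O) (psub X O) = 0.

(* Convex 4-hedral angle with vertex O: rays from O through the convex
   quadrilateral Q1Q2Q3Q4 lying in a plane not through O. *)
Definition hedral4 (O Q1 Q2 Q3 Q4 : pt) : Prop :=
  convex_quad Q1 Q2 Q3 Q4 /\ det3 (psub Q2 Q1) (psub Q4 Q1) (psub O Q1) <> 0.

(* Admissible: the isotropic line through O meets the interior of the angle,
   i.e. contains a point O + lam (q - O) with lam > 0 and q in the relative
   interior of the quadrilateral (strictly positive convex combination). *)
Definition admissible (O Q1 Q2 Q3 Q4 : pt) : Prop :=
  exists (t lam w1 w2 w3 w4 : R),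
    0 < lam /\ 0 < w1 /\ 0 < w2 /\ 0 < w3 /\ 0 < w4 /\ w1 + w2 + w3 + w4 = 1 /\
    padd O (pscale t ez) =
    padd O (pscale lam (psub (padd (padd (pscale w1 Q1) (pscale w2 Q2))
                                   (padd (pscale w3 Q3) (pscale w4 Q4))) O)).

Definition face_is_flat (G : nat -> nat -> pt) (k l : nat) (O A B : pt) : Prop :=
  forall X, in_face G k l X <-> in_plane3 O A B X.

Definition dual_convex (m n : nat) (F : nat -> nat -> pt) : Prop :=
  (2 <= m)%N /\ (2 <= n)%N /\
  forall i j, (0 < i < m)%N -> (0 < j < n)%N ->
    exists Q1 Q2 Q3 Q4 : pt,
      hedral4 (F i j) Q1 Q2 Q3 Q4 /\ admissible (F i j) Q1 Q2 Q3 Q4 /\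
      face_is_flat F i.-1 j.-1 (F i j) Q1 Q2 /\
      face_is_flat F i j.-1 (F i j) Q2 Q3 /\
      face_is_flat F i j (F i j) Q3 Q4 /\
      face_is_flat F i.-1 j (F i j) Q4 Q1.

(* Top view of the dual point p^* of the plane p of face p_kl:
   the plane is z = P1 x + P2 y - P3, with normal N = (P1, P2, -1) ~ n,
   so (P1, P2) = (-n_x/n_z, -n_y/n_z). *)
Definition dual_top (G : nat -> nat -> pt) (k l : nat) : R * R :=
  let N := cross (psub (G k.+1 l) (G k l)) (psub (G k l.+1) (G k l)) in
  (- px N / pz N, - py N / pz N).

Definition det2 (a b : R * R) : R := a.1 * b.2 - a.2 * b.1.

Definition Omega (G : nat -> nat -> pt) (i j : nat) : R :=
  let d1 := dual_top G i.-1 j.-1 in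
  let d2 := dual_top G i j.-1 in
  let d3 := dual_top G i j in
  let d4 := dual_top G i.-1 j in
  (det2 d1 d2 + det2 d2 d3 + det2 d3 d4 + det2 d4 d1) / 2.

Definition iso_cong (phi c1 c2 : R) (b : pt) (x : pt) : pt :=
  (- phi * py x + px b, phi * px x + py b, c1 * px x + c2 * py x + pz b).

Definition is_inf_iso_def (m n : nat) (F V : nat -> nat -> pt) : Prop :=
  (forall k l, (k < m)%N -> (l < n)%N ->
     exists (phi c1 c2 : R) (b : pt), forall i j,
       (i = k \/ i = k.+1) -> (j = l \/ j = l.+1) ->
       V i j = iso_cong phi c1 c2 b (F i j)) /\
  (forall i j, (0 < i < m)%N -> (0 < j < n)%N ->
     is_derive (0 : R) (1 : R)
       (fun t : R => Omega (fun a c => padd (F a c) (pscale t (V a c))) i j) 0).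

Definition trivial_def (m n : nat) (F V : nat -> nat -> pt) : Prop :=
  exists (phi c1 c2 : R) (b : pt), forall i j, (i <= m)%N -> (j <= n)%N ->
    V i j = iso_cong phi c1 c2 b (F i j).

Definition inf_flexible (m n : nat) (F : nat -> nat -> pt) : Prop :=
  exists V, is_inf_iso_def m n F V /\ ~ trivial_def m n F V.

Definition isotropic (v : pt) : Prop := px v = 0 /\ py v = 0.

End IsotropicNets.

From HB Require Import structures.
From mathcomp Require Import all_boot all_order all_algebra.
From mathcomp Require Import all_classical all_reals all_analysis.
From mathcomp Require Import ring lra zify.
Import Order.TTheory GRing.Theory Num.Theory.

Local Open Scope ring_scope.

(* Dual-convexity makes every face plane non-vertical: at an interior vertex the
   isotropic line meets the interior of the admissible 4-hedral angle, so it lies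
   in none of the planes of its flat angles.  Hence every edge has a
   non-degenerate top view, and since adjacent faces share an edge, the top views
   of all face congruences of a deformation V are one planar infinitesimal motion
   (rotation speed phi about the z-axis plus a translation).  Keeping only the
   isotropic components V' of V preserves the face condition, and the top views
   of the dual points of the faces at a vertex along F + tV are the images of
   those along F + tV' under one linear map of determinant 1 / (1 + t^2 phi^2).  So
   Omega(F + tV') = (1 + t^2 phi^2) Omega(F + tV) has zero derivative at 0, and V'
   is nontrivial because V - V' is the restriction of a single congruence. *)

Section IsotropicFlexibility.
Context {R : realType}.
Implicit Types (A B C D O Y a b : pt R) (G : nat -> nat -> pt R).

Definition vol O A B C : R := det3 (psub A O) (psub B O) (psub C O).

Definition comb4 (w1 w2 w3 w4 : R) A B C D : pt R :=
  padd (padd (pscale w1 A) (pscale w2 B)) (padd (pscale w3 C) (pscale w4 D)).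

Ltac unfold_pt :=
  rewrite /vol /comb4 /in_plane3 /det3 /turn /cross /dot /psub /padd /pscale /iso_cong
          /ez /pzero /px /py /pz /=.
Ltac pt_ring :=
  repeat match goal with p : pt _ |- _ => destruct p as [[? ?] ?] end;
  unfold_pt; first [ring | congr (_, _, _); ring].

Lemma dot_scalel (l : R) a b : dot (pscale l a) b = l * dot a b.
Proof. pt_ring. Qed.

Lemma lagrange_identity a b :
  dot (cross a b) (cross a b) = dot a a * dot b b - dot a b ^+ 2.
Proof. pt_ring. Qed.

Lemma cross_cross a b :
  cross a (cross a b) = psub (pscale (dot a b) a) (pscale (dot a a) b).
Proof. pt_ring. Qed.

Lemma dot_self_ge0 a : 0 <= dot a a.
Proof. case: a => [[a1 a2] a3]; unfold_pt; nra. Qed.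

Lemma cross0r a : cross a (pzero R) = pzero R.
Proof. pt_ring. Qed.

Lemma pscale0 a : pscale 0 a = pzero R.
Proof. pt_ring. Qed.

Lemma pscale1 a : pscale 1 a = a.
Proof. pt_ring. Qed.

Lemma pscaleA (l l' : R) a : pscale l (pscale l' a) = pscale (l * l') a.
Proof. pt_ring. Qed.

Lemma psub_eq0 a b : psub a b = pzero R -> a = b.
Proof.
case: a b => [[a1 a2] a3] [[b1 b2] b3]; unfold_pt.
by case=> /subr0_eq -> /subr0_eq -> /subr0_eq ->.
Qed.

Lemma cross_eq0_scale a b : cross a b = pzero R -> 0 < dot a b ->
  exists2 l, 0 < l & b = pscale l a.
Proof.
move=> hab hpos.
have hsq : dot a b ^+ 2 = dot a a * dot b b.
  apply/eqP; rewrite eq_sym -subr_eq0 -lagrange_identity hab.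
  by unfold_pt; rewrite !mul0r !addr0.
have haa : 0 < dot a a.
  rewrite lt_def dot_self_ge0 andbT; apply/eqP => h0.
  by move: hsq; rewrite h0 mul0r => /eqP; rewrite sqrf_eq0 gt_eqF.
have hscale : pscale (dot a b) a = pscale (dot a a) b.
  by apply: psub_eq0; rewrite -cross_cross hab cross0r.
exists (dot a b / dot a a); first exact: divr_gt0.
rewrite -{1}[b]pscale1 -(mulVf (lt0r_neq0 haa)) -(pscaleA (dot a a)^-1).
by rewrite -hscale pscaleA mulrC.
Qed.

Lemma coplanar_turns_parallel A B C D :
  det3 (psub B A) (psub C A) (psub D A) = 0 ->
  [/\ cross (turn A B C) (turn B C D) = pzero R,
      cross (turn A B C) (turn C D A) = pzero R &
      cross (turn A B C) (turn D A B) = pzero R].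
Proof.
move=> hd.
have e2 : cross (turn A B C) (turn B C D) =
  pscale (det3 (psub B A) (psub C A) (psub D A)) (psub C B) by pt_ring.
have e3 : cross (turn A B C) (turn C D A) =
  pscale (det3 (psub B A) (psub C A) (psub D A)) (psub C A) by pt_ring.
have e4 : cross (turn A B C) (turn D A B) =
  pscale (det3 (psub B A) (psub C A) (psub D A)) (psub B A) by pt_ring.
by rewrite e2 e3 e4 hd !pscale0.
Qed.

Lemma convex_quad_turns {A B C D} : convex_quad A B C D ->
  [/\ exists2 l, 0 < l & turn B C D = pscale l (turn A B C),
      exists2 l, 0 < l & turn C D A = pscale l (turn A B C) &
      exists2 l, 0 < l & turn D A B = pscale l (turn A B C)].
Proof.
case=> /coplanar_turns_parallel [p2 p3 p4] [_ [d2 [d3 d4]]].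
by split; apply: cross_eq0_scale.
Qed.

Lemma vol_turn O A B C :
  [/\ vol O A B C = dot (turn A B C) (psub A O),
      vol O A B C = dot (turn A B C) (psub B O) &
      vol O A B C = dot (turn A B C) (psub C O)].
Proof. by split; pt_ring. Qed.

Lemma hedral4_vol_same_sign {O Q1 Q2 Q3 Q4} : hedral4 O Q1 Q2 Q3 Q4 ->
  [/\ 0 < vol O Q1 Q2 Q3 * vol O Q1 Q2 Q3,
      0 < vol O Q1 Q2 Q3 * vol O Q2 Q3 Q4,
      0 < vol O Q1 Q2 Q3 * vol O Q3 Q4 Q1 &
      0 < vol O Q1 Q2 Q3 * vol O Q4 Q1 Q2].
Proof.
case=> hQ hO.
have [[l2 hl2 eT2] [l3 hl3 eT3] [l4 hl4 eT4]] := convex_quad_turns hQ.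
have [v1A v1B _] := vol_turn O Q1 Q2 Q3.
have v2 : vol O Q2 Q3 Q4 = l2 * vol O Q1 Q2 Q3.
  by have [-> _ _] := vol_turn O Q2 Q3 Q4; rewrite eT2 dot_scalel v1B.
have v3 : vol O Q3 Q4 Q1 = l3 * vol O Q1 Q2 Q3.
  by have [_ _ ->] := vol_turn O Q3 Q4 Q1; rewrite eT3 dot_scalel v1A.
have v4 : vol O Q4 Q1 Q2 = l4 * vol O Q1 Q2 Q3.
  by have [_ -> _] := vol_turn O Q4 Q1 Q2; rewrite eT4 dot_scalel v1A.
have hs : vol O Q1 Q2 Q3 != 0.
  apply/eqP => h0; apply: hO.
  have -> : det3 (psub Q2 Q1) (psub Q4 Q1) (psub O Q1) = - vol O Q4 Q1 Q2 by pt_ring.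
  by rewrite v4 h0 mulr0 oppr0.
have hss : 0 < vol O Q1 Q2 Q3 * vol O Q1 Q2 Q3.
  by rewrite -expr2 exprn_even_gt0 // hs orbT.
by rewrite v2 v3 v4 !(mulrCA (vol O Q1 Q2 Q3)); split => //; rewrite mulr_gt0.
Qed.

Lemma vol_comb4_edges O Q1 Q2 Q3 Q4 (w1 w2 w3 w4 : R) :
  w1 + w2 + w3 + w4 = 1 -> let Y := comb4 w1 w2 w3 w4 Q1 Q2 Q3 Q4 in
  [/\ vol O Q1 Q2 Y = w3 * vol O Q1 Q2 Q3 + w4 * vol O Q4 Q1 Q2,
      vol O Q2 Q3 Y = w4 * vol O Q2 Q3 Q4 + w1 * vol O Q1 Q2 Q3,
      vol O Q3 Q4 Y = w1 * vol O Q3 Q4 Q1 + w2 * vol O Q2 Q3 Q4 &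
      vol O Q4 Q1 Y = w2 * vol O Q4 Q1 Q2 + w3 * vol O Q3 Q4 Q1].
Proof.
move=> hw Y; have {}hw : w1 = 1 - w2 - w3 - w4 by rewrite -hw; ring.
by rewrite /Y hw; split; pt_ring.
Qed.

Lemma same_sign_comb_neq0 (s u v wu wv : R) :
  0 < wu -> 0 < wv -> 0 < s * u -> 0 < s * v -> wu * u + wv * v != 0.
Proof.
move=> hu hv hsu hsv; apply/eqP => h.
have : s * (wu * u + wv * v) = 0 by rewrite h mulr0.
nra.
Qed.

Lemma admissible_isotropic {P X} {t lam : R} :
  padd P (pscale t (ez R)) = padd P (pscale lam X) -> 0 < lam -> isotropic X.
Proof.
case: P X => [[p1 p2] p3] [[x1 x2] x3] + /lt0r_neq0 hl.
unfold_pt; case=> e1 e2 _; rewrite /isotropic /px /py /=.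
by split; apply: (mulfI hl); [move/addrI: e1 | move/addrI: e2]; rewrite !mulr0 => <-.
Qed.

Lemma det3_isotropic a b {X} : isotropic X -> det3 a b X = pz X * det3 a b (ez R).
Proof.
by case: X => [[x1 x2] x3]; rewrite /isotropic /px /py /= => -[-> ->]; pt_ring.
Qed.

Lemma vertical_plane_vol O A B Y :
  in_plane3 O A B (padd O (ez R)) -> isotropic (psub Y O) -> vol O A B Y = 0.
Proof.
move=> hp hY; have hez : psub (padd O (ez R)) O = ez R by pt_ring.
by rewrite /vol (det3_isotropic _ _ hY) -hez hp mulr0.
Qed.

Lemma admissible_flat_angles_nonvertical {O Q1 Q2 Q3 Q4} :
  hedral4 O Q1 Q2 Q3 Q4 -> admissible O Q1 Q2 Q3 Q4 ->
  [/\ ~ in_plane3 O Q1 Q2 (padd O (ez R)), ~ in_plane3 O Q2 Q3 (padd O (ez R)),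
      ~ in_plane3 O Q3 Q4 (padd O (ez R)) & ~ in_plane3 O Q4 Q1 (padd O (ez R))].
Proof.
move=> hH [t [lam [w1 [w2 [w3 [w4 [hlam [hw1 [hw2 [hw3 [hw4 [hw hE]]]]]]]]]]]].
have [s11 s22 s33 s44] := hedral4_vol_same_sign hH.
have [e12 e23 e34 e41] := vol_comb4_edges O Q1 Q2 Q3 Q4 w1 w2 w3 w4 hw.
have hY : isotropic (psub (comb4 w1 w2 w3 w4 Q1 Q2 Q3 Q4) O).
  exact: admissible_isotropic hE hlam.
(* A vertical plane O Qa Qb would contain the isotropic direction Y - O, but the
   volume of O Qa Qb Y is a positive combination of volumes of one strict sign. *)
split=> /vertical_plane_vol/(_ hY)/eqP; rewrite ?e12 ?e23 ?e34 ?e41;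
  by apply/negP; apply: (same_sign_comb_neq0 (vol O Q1 Q2 Q3)).
Qed.

Definition normal G k l : pt R :=
  cross (psub (G k.+1 l) (G k l)) (psub (G k l.+1) (G k l)).

Lemma flat_face_nonvertical G k l O A B :
  face_is_flat G k l O A B -> ~ in_plane3 O A B (padd O (ez R)) ->
  pz (normal G k l) != 0.
Proof.
move=> hflat hvert; apply/eqP => hz; apply/hvert/hflat.
have : in_face G k l O by apply/hflat; pt_ring.
move: hz; rewrite /in_face /normal.
have -> : forall e1 e2 P, det3 e1 e2 (psub (padd O (ez R)) P) =
    det3 e1 e2 (psub O P) + pz (cross e1 e2) by move=> *; pt_ring.
by move=> -> ->; rewrite addr0.
Qed.

Lemma interior_vertex_faces_nonvertical {m n F} : dual_convex m n F ->
  forall i j, (0 < i < m)%N -> (0 < j < n)%N ->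
  [/\ pz (normal F i.-1 j.-1) != 0, pz (normal F i j.-1) != 0,
      pz (normal F i j) != 0 & pz (normal F i.-1 j) != 0].
Proof.
case=> _ [_ hdc] i j hi hj.
have [Q1 [Q2 [Q3 [Q4 [hH [hA [f1 [f2 [f3 f4]]]]]]]]] := hdc i j hi hj.
have [n1 n2 n3 n4] := admissible_flat_angles_nonvertical hH hA.
by split; [exact: flat_face_nonvertical f1 n1 | exact: flat_face_nonvertical f2 n2
  | exact: flat_face_nonvertical f3 n3 | exact: flat_face_nonvertical f4 n4].
Qed.

Lemma dual_convex_faces_nonvertical {m n F} : dual_convex m n F ->
  forall k l, (k < m)%N -> (l < n)%N -> pz (normal F k l) != 0.
Proof.
move=> hdc k l hk hl; have [hm [hn _]] := hdc.
have hv := interior_vertex_faces_nonvertical hdc.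
case: k hk => [|k] hk; case: l hl => [|l] hl.
- by case: (hv 1%N 1%N hm hn).
- by case: (hv 1%N l.+1 hm hl).
- by case: (hv k.+1 1%N hk hn).
- by case: (hv k.+1 l.+1 hk hl).
Qed.

Definition top (p : pt R) : R * R := (px p, py p).

Definition hrot (phi : R) (beta : R * R) (p : pt R) : R * R :=
  (- phi * py p + beta.1, phi * px p + beta.2).

Lemma top_iso_cong phi c1 c2 b p : top (iso_cong phi c1 c2 b p) = hrot phi (top b) p.
Proof. by []. Qed.

Lemma hrot_inj {phi beta phi' beta' p q} : top p != top q ->
  hrot phi beta p = hrot phi' beta' p -> hrot phi beta q = hrot phi' beta' q ->
  phi = phi' /\ beta = beta'.
Proof.
case: p q beta beta' => [[p1 p2] p3] [[q1 q2] q3] [b1 b2] [b1' b2'].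
rewrite /top /hrot /px /py /= => hpq [ep1 ep2] [eq1 eq2].
have dphi : phi = phi'.
  apply/eqP; rewrite -subr_eq0; apply: contraNT hpq => hne.
  have e1 : q1 = p1 by apply/subr0_eq/(mulfI hne); rewrite mulr0; lra.
  have e2 : q2 = p2 by apply/subr0_eq/(mulfI hne); rewrite mulr0; lra.
  by rewrite e1 e2.
by subst phi'; split => //; congr pair; lra.
Qed.

Lemma top_neq_of_normal {G k l} : pz (normal G k l) != 0 ->
  top (G k.+1 l) != top (G k l) /\ top (G k l.+1) != top (G k l).
Proof.
rewrite /normal /top.
case: (G k.+1 l) (G k l) (G k l.+1) => [[a1 a2] a3] [[b1 b2] b3] [[c1 c2] c3] hz.
by split; move: hz; apply: contra_neq; rewrite /px /py /= => -[-> ->]; unfold_pt; ring.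
Qed.

Definition face_condition m n F V : Prop :=
  forall k l, (k < m)%N -> (l < n)%N ->
    exists (phi c1 c2 : R) (b : pt R), forall i j,
      (i = k \/ i = k.+1) -> (j = l \/ j = l.+1) ->
      V i j = iso_cong phi c1 c2 b (F i j).

Definition face_hrot F V k l phi beta : Prop :=
  forall i j, (i = k \/ i = k.+1) -> (j = l \/ j = l.+1) ->
    top (V i j) = hrot phi beta (F i j).

Lemma face_hrot_of_cong F V k l phi c1 c2 b :
  (forall i j, (i = k \/ i = k.+1) -> (j = l \/ j = l.+1) ->
     V i j = iso_cong phi c1 c2 b (F i j)) ->
  face_hrot F V k l phi (top b).
Proof. by move=> h i j hi hj; rewrite h. Qed.

(* [rot_scale s] is the inverse of [1 - s J], [J] the quarter turn: the map
   [1 + s J] on top views acts on the gradients [(P1, P2)] of planes through its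
   inverse transpose. *)
Definition rot_scale (s : R) (u : R * R) : R * R :=
  ((u.1 - s * u.2) / (1 + s ^+ 2), (s * u.1 + u.2) / (1 + s ^+ 2)).

Lemma one_plus_sqr_neq0 (s : R) : 1 + s ^+ 2 != 0.
Proof. by rewrite lt0r_neq0 // ltr_wpDr // sqr_ge0. Qed.

Lemma rot_scale0 u : rot_scale 0 u = u.
Proof.
by case: u => x y; rewrite /rot_scale /= expr0n addr0 divr1 !mul0r subr0 add0r divr1.
Qed.

(* [cross (M u) (M v)] is the cofactor matrix of [M] applied to [cross u v], with
   [M] the linear part of [x |-> x + t a x]; the translation [b] cancels. *)
Lemma normal_cong {G F k l} {t phi c1 c2 : R} {b} :
  (forall i j, (i = k \/ i = k.+1) -> (j = l \/ j = l.+1) ->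
     G i j = padd (F i j) (pscale t (iso_cong phi c1 c2 b (F i j)))) ->
  let N := normal F k l in let s := t * phi in
  normal G k l = (px N - s * py N + (s * t * c2 - t * c1) * pz N,
                  s * px N + py N - (t * c2 + s * t * c1) * pz N,
                  (1 + s ^+ 2) * pz N).
Proof.
move=> hG N s; rewrite /N /s /normal !hG; try by [left | right].
clear hG; move: (F k l) (F k.+1 l) (F k l.+1) b => ? ? ? ?; pt_ring.
Qed.

Lemma dual_topE G k l : dual_top G k l =
  (- px (normal G k l) / pz (normal G k l), - py (normal G k l) / pz (normal G k l)).
Proof. by []. Qed.

Lemma dual_top_cong {G F k l} {t phi c1 c2 : R} {b} :
  (forall i j, (i = k \/ i = k.+1) -> (j = l \/ j = l.+1) ->
     G i j = padd (F i j) (pscale t (iso_cong phi c1 c2 b (F i j)))) ->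
  pz (normal F k l) != 0 ->
  dual_top G k l =
    rot_scale (t * phi) ((dual_top F k l).1 + t * c1, (dual_top F k l).2 + t * c2).
Proof.
move=> hG; rewrite !dual_topE (normal_cong hG) /=.
have := one_plus_sqr_neq0 (t * phi).
move: (normal F k l) => [[x y] z]; rewrite /rot_scale /px /py /pz /= => hs hz.
by congr pair; field; rewrite ?hs ?hz.
Qed.

Lemma Omega_rot_scale G G' i j (s : R) :
  dual_top G i.-1 j.-1 = rot_scale s (dual_top G' i.-1 j.-1) ->
  dual_top G i j.-1 = rot_scale s (dual_top G' i j.-1) ->
  dual_top G i j = rot_scale s (dual_top G' i j) ->
  dual_top G i.-1 j = rot_scale s (dual_top G' i.-1 j) ->
  Omega G' i j = Omega G i j * (1 + s ^+ 2).
Proof.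
rewrite /Omega => -> -> -> ->; have := one_plus_sqr_neq0 s.
move: (dual_top G' _ _) (dual_top G' i j.-1) (dual_top G' i j) (dual_top G' i.-1 j).
by move=> [x1 y1] [x2 y2] [x3 y3] [x4 y4] hs; rewrite /det2 /rot_scale /=; field.
Qed.

Definition vert (v : pt R) : pt R := (0, 0, pz v).

Lemma vert_iso_cong phi c1 c2 b p :
  vert (iso_cong phi c1 c2 b p) = iso_cong 0 c1 c2 (vert b) p.
Proof. rewrite /vert; pt_ring. Qed.

Lemma pt_eq_top_pz a b : top a = top b -> pz a = pz b -> a = b.
Proof.
by case: a b => [[a1 a2] a3] [[b1 b2] b3]; rewrite /top /px /py /pz /= => -[-> ->] ->.
Qed.

Lemma vert_face_condition m n F V : face_condition m n F V ->
  face_condition m n F (fun i j => vert (V i j)).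
Proof.
move=> hf k l hk hl; have [phi [c1 [c2 [b hb]]]] := hf k l hk hl.
by exists 0, c1, c2, (vert b) => i j hi hj; rewrite hb // vert_iso_cong.
Qed.

Lemma is_derive_mul0 (f g : R -> R) (x v : R) :
  is_derive x v f 0 -> is_derive x v g 0 -> is_derive x v (f * g) 0.
Proof.
by move=> hf hg; apply: is_derive_eq (is_deriveM hf hg) _; rewrite !scaler0 addr0.
Qed.

Lemma is_derive0_one_plus_sqr (phi : R) :
  is_derive (0 : R) (1 : R) (fun t : R => 1 + (t * phi) ^+ 2) 0.
Proof. by apply: is_derive_eq; rewrite !(mul0r, scale0r, addr0, mulr0). Qed.

Section Deformation.
Context {m n : nat} {F V : nat -> nat -> pt R}.
Hypothesis hnz : forall k l, (k < m)%N -> (l < n)%N -> pz (normal F k l) != 0.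
Hypothesis hface : face_condition m n F V.

Lemma face_hrot_row k l phi beta : (k.+1 < m)%N -> (l < n)%N ->
  face_hrot F V k l phi beta -> face_hrot F V k.+1 l phi beta.
Proof.
move=> hk hl h.
have [phi' [c1 [c2 [b /face_hrot_of_cong h']]]] := hface _ _ hk hl.
have [_ hne] := top_neq_of_normal (hnz _ _ hk hl).
have [-> ->] : phi = phi' /\ beta = top b.
  by apply: (hrot_inj hne); rewrite -h ?h'; try by [left | right].
exact: h'.
Qed.

Lemma face_hrot_col k l phi beta : (k < m)%N -> (l.+1 < n)%N ->
  face_hrot F V k l phi beta -> face_hrot F V k l.+1 phi beta.
Proof.
move=> hk hl h.
have [phi' [c1 [c2 [b /face_hrot_of_cong h']]]] := hface _ _ hk hl.
have [hne _] := top_neq_of_normal (hnz _ _ hk hl).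
have [-> ->] : phi = phi' /\ beta = top b.
  by apply: (hrot_inj hne); rewrite -h ?h'; try by [left | right].
exact: h'.
Qed.

Lemma face_hrot_global : (0 < m)%N -> (0 < n)%N ->
  exists phi beta, forall k l, (k < m)%N -> (l < n)%N -> face_hrot F V k l phi beta.
Proof.
move=> hm hn; have [phi [c1 [c2 [b /face_hrot_of_cong h00]]]] := hface _ _ hm hn.
exists phi, (top b).
have col0 k : (k < m)%N -> face_hrot F V k 0 phi (top b).
  by elim: k => [|k IH] hk //; apply: face_hrot_row hk hn (IH (ltnW hk)).
move=> k l hk; elim: l => [|l IH] hl; first exact: col0.
exact: face_hrot_col hk hl (IH (ltnW hl)).
Qed.

Lemma vertex_hrot_global : (0 < m)%N -> (0 < n)%N ->
  exists phi beta, forall i j, (i <= m)%N -> (j <= n)%N ->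
    top (V i j) = hrot phi beta (F i j).
Proof.
move=> hm hn; have [phi [beta h]] := face_hrot_global hm hn.
by exists phi, beta => i j hi hj; apply: (h (minn i m.-1) (minn j n.-1)); lia.
Qed.

Context {phi0 : R} {beta0 : R * R}.
Hypothesis hglob : forall i j, (i <= m)%N -> (j <= n)%N ->
  top (V i j) = hrot phi0 beta0 (F i j).

Lemma face_rotation_eq {k l phi c1 c2 b} : (k < m)%N -> (l < n)%N ->
  (forall i j, (i = k \/ i = k.+1) -> (j = l \/ j = l.+1) ->
     V i j = iso_cong phi c1 c2 b (F i j)) ->
  phi = phi0.
Proof.
move=> hk hl /face_hrot_of_cong h.
have [hne _] := top_neq_of_normal (hnz _ _ hk hl).
have e i j : (i = k \/ i = k.+1) -> (j = l \/ j = l.+1) ->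
    hrot phi (top b) (F i j) = hrot phi0 beta0 (F i j).
  by move=> hi hj; rewrite -h // hglob //; lia.
by have [] := hrot_inj hne (e _ _ (or_intror erefl) (or_introl erefl))
  (e _ _ (or_introl erefl) (or_introl erefl)).
Qed.

Lemma face_dual_top_vert k l (t : R) : (k < m)%N -> (l < n)%N ->
  dual_top (fun i j => padd (F i j) (pscale t (V i j))) k l =
  rot_scale (t * phi0) (dual_top (fun i j => padd (F i j) (pscale t (vert (V i j)))) k l).
Proof.
move=> hk hl; have [phi [c1 [c2 [b hb]]]] := hface _ _ hk hl.
have ephi := face_rotation_eq hk hl hb; subst phi.
have hG i j : (i = k \/ i = k.+1) -> (j = l \/ j = l.+1) ->
    padd (F i j) (pscale t (V i j)) =
    padd (F i j) (pscale t (iso_cong phi0 c1 c2 b (F i j))).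
  by move=> hi hj; rewrite hb.
have hG' i j : (i = k \/ i = k.+1) -> (j = l \/ j = l.+1) ->
    padd (F i j) (pscale t (vert (V i j))) =
    padd (F i j) (pscale t (iso_cong 0 c1 c2 (vert b) (F i j))).
  by move=> hi hj; rewrite hb // vert_iso_cong.
rewrite (dual_top_cong hG (hnz _ _ hk hl)) (dual_top_cong hG' (hnz _ _ hk hl)).
by rewrite mulr0 rot_scale0.
Qed.

Lemma vert_vertex_condition {i j} : (0 < i < m)%N -> (0 < j < n)%N ->
  is_derive (0 : R) (1 : R)
    (fun t : R => Omega (fun u v => padd (F u v) (pscale t (V u v))) i j) 0 ->
  is_derive (0 : R) (1 : R)
    (fun t : R => Omega (fun u v => padd (F u v) (pscale t (vert (V u v)))) i j) 0.
Proof.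
move=> hi hj hderiv.
have -> : (fun t : R => Omega (fun u v => padd (F u v) (pscale t (vert (V u v)))) i j) =
    (fun t : R => Omega (fun u v => padd (F u v) (pscale t (V u v))) i j) *
    (fun t => 1 + (t * phi0) ^+ 2).
  by apply/funext => t /=; apply: Omega_rot_scale; apply: face_dual_top_vert; lia.
exact: is_derive_mul0 hderiv (is_derive0_one_plus_sqr phi0).
Qed.

Lemma vert_nontrivial : ~ trivial_def m n F V ->
  ~ trivial_def m n F (fun i j => vert (V i j)).
Proof.
move=> hnt [phi [c1 [c2 [b htr]]]]; apply: hnt.
exists phi0, c1, c2, (beta0.1, beta0.2, pz b) => i j hi hj.
apply: pt_eq_top_pz; first by rewrite hglob // top_iso_cong; case: beta0.
by have /(congr1 (@pz R)) := htr i j hi hj.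
Qed.

End Deformation.

End IsotropicFlexibility.

Theorem lemma3 (R : realType) (m n : nat) (F : nat -> nat -> pt R) :
  is_net m n F -> dual_convex m n F -> inf_flexible m n F ->
  exists V : nat -> nat -> pt R,
    is_inf_iso_def m n F V /\ ~ trivial_def m n F V /\
    (forall i j, (i <= m)%N -> (j <= n)%N -> isotropic (V i j)).
Proof.
move=> _ hdc [V [[hface hvert] hnt]].
have [hm [hn _]] := hdc.
have hnz := dual_convex_faces_nonvertical hdc.
have [phi0 [beta0 hglob]] := vertex_hrot_global hnz hface (ltnW hm) (ltnW hn).
exists (fun i j => vert (V i j)); split; [split | split].
- exact: vert_face_condition.
- by move=> i j hi hj; apply: (vert_vertex_condition hnz hface hglob hi hj); exact: hvert.
- exact: vert_nontrivial hglob hnt.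
- by move=> i j _ _; split.
Qed.
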